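(* Let $I$ be a countable index set with nested finite subsets $I_1\subset I_2\subset\cdots$, $\bigcup_nI_n=I$, let $W$ be a compact Hausdorff space and $m:\mathcal{F}[I]\to C^*(W)$ a minimal frame measure function. Then there exists a continuous bijection $\varphi:\mathbb{N}^0\to W$ with continuous inverse such that $m(\mathcal{F})(\varphi(\hat p))=\mu^0(\mathcal{F})(\hat p)$ for all $\hat p\in\mathbb{N}^0$ and all $\mathcal{F}\in\mathcal{F}[I]$.
   Context: $\mathcal{F}[I]$: families $\{f_i\}_{i\in I}$ in a separable Hilbert space that are frames for their closed span; $\tilde f_i=S^{-1}f_i$ canonical dual; $b(\mathcal{F})=(b_n)$ with $b_n=\sum_{i\in I_n}\langle f_i,\tilde f_i\rangle$. Frame compatible sequences: nonnegative $\mathbf{x}$ with $0\le x_1\le|I_1|$, $0\le x_i-x_{i-1}\le|I_i\setminus I_{i-1}|$; $X$ their set, $X^+=\{c\mathbf{x}:c\ge0,\mathbf{x}\in X\}$, $X^{\mathbb{R}}=X^+-X^+$. $\mathbf{x}\approx\mathbf{y}$ iff $\lim(x_n-y_n)/|I_n|=0$; $\mathbf{y}\leqq\mathbf{x}$ iff $\liminf(x_n-y_n)/|I_n|\ge0$. For compact Hausdorff $V$, $C^*(V)$: real continuous functions. A sequence measure function is a linear $m:X^{\mathbb{R}}\to C^*(V)$ with $m(\mathbf{x})=m(\mathbf{y})\iff\mathbf{x}\approx\mathbf{y}$ on $X^{\mathbb{R}}$, $m(\mathbf{x})\le m(\mathbf{y})\iff\mathbf{x}\leqq\mathbf{y}$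 on $X^+$, $m((|I_1|,|I_2|,\dots))=1$. It is separable if $m(X^{\mathbb{R}})$ separates points of $V$; reducible if for some compact $V'\subsetneq V$ the restriction $\mathbf{x}\mapsto m(\mathbf{x})|_{V'}$ is a sequence measure function; minimal if separable and not reducible. A frame measure function is $\mathcal{F}\mapsto m(b(\mathcal{F}))$ with $m$ a sequence measure function; it is minimal if $m$ is minimal. $\mathbb{N}^*$: free ultrafilters on $\mathbb{N}$ with its standard (Stone–Čech remainder) topology; $\mu(\mathbf{x})(p)=p\text{-}\lim_n x_n/|I_n|$ (ultrafilter limit). Define $p_1\sim p_2$ iff $\mu(\mathbf{x})(p_1)=\mu(\mathbf{x})(p_2)$ for all $\mathbf{x}\in X^{\mathbb{R}}$, $\mathbb{N}^0=\mathbb{N}^*/\sim$ with the quotient topology, $\hat p$ the class of $p$, and $\mu^0(\mathcal{F})(\hat p)=\mu(b(\mathcal{F}))(p)=p\text{-}\lim_n b_n(\mathcal{F})/|I_n|$. *)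

From HB Require Import structures.
From mathcomp Require Import all_boot all_order all_algebra finmap generic_quotient.
From mathcomp Require Import all_classical all_reals all_analysis.
From mathcomp Require Import complex.

Set Implicit Arguments.
Unset Strict Implicit.
Unset Printing Implicit Defensive.

Import Order.TTheory GRing.Theory Num.Theory numFieldTopology.Exports numFieldNormedType.Exports.
Local Open Scope classical_set_scope.
Local Open Scope ring_scope.

Section SeqDefs.
Variables (R : realType) (I : choiceType) (In : nat -> {fset I}).

Definition cardI (n : nat) : R := (#|` In n|)%:R.
Definition inX (x : nat -> R) : Prop :=
  (0 <= x 0%N <= cardI 0%N) /\
  forall n, 0 <= x n.+1 - x n <= (#|` (In n.+1 `\` In n)%fset|)%:R.
Definition inXplus (x : nat -> R) : Prop :=
  exists (c : R) (y : nat -> R), [/\ 0 <= c, inX y & x = (fun n => c * y n)].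
Definition inXR (x : nat -> R) : Prop :=
  exists y z, [/\ inXplus y, inXplus z & x = (fun n => y n - z n)].
Definition seq_approx (x y : nat -> R) : Prop :=
  (fun n => (x n - y n) / cardI n) @ \oo --> (0 : R).
Definition seq_leqq (y x : nat -> R) : Prop :=
  (0 <= limn_einf (fun n => ((x n - y n) / cardI n)%:E))%E.

Definition smf_on (V : topologicalType) (S : set V) (m : (nat -> R) -> V -> R) : Prop :=
  [/\ (forall x, inXR x -> {within S, continuous (m x)}),
      (forall (a : R) x y, inXR x -> inXR y -> forall v, S v ->
          m (fun n => a * x n + y n) v = a * m x v + m y v),
      (forall x y, inXR x -> inXR y ->
          ((forall v, S v -> m x v = m y v) <-> seq_approx x y)),
      (forall x y, inXplus x -> inXplus y ->
          ((forall v, S v -> m x v <= m y v) <-> seq_leqq x y)) &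
      (forall v, S v -> m cardI v = 1)].

Definition seq_measure_fun (V : topologicalType) (m : (nat -> R) -> V -> R) :=
  smf_on [set: V] m.
Definition smf_separable (V : topologicalType) (m : (nat -> R) -> V -> R) :=
  forall v w : V, v <> w -> exists x, inXR x /\ m x v <> m x w.
Definition smf_reducible (V : topologicalType) (m : (nat -> R) -> V -> R) :=
  exists V' : set V, [/\ compact V', V' `<` [set: V] & smf_on V' m].
Definition smf_minimal (V : topologicalType) (m : (nat -> R) -> V -> R) :=
  smf_separable m /\ ~ smf_reducible m.
End SeqDefs.

Definition free_ultrafilter (p : set_system nat) : Prop :=
  [/\ p setT, ~ p set0, (forall A B, p A -> p B -> p (A `&` B)) &
      (forall A B, A `<=` B -> p A -> p B)] /\
  (forall A, p A \/ p (~` A)) /\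
  (forall A, finite_set A -> ~ p A).

Definition Nstar := {p : set_system nat | free_ultrafilter p}.
HB.instance Definition _ := gen_eqMixin Nstar.
HB.instance Definition _ := gen_choiceMixin Nstar.

Definition ubase (A : set nat) : set Nstar := [set p | proj1_sig p A].

Lemma ubase_cover : \bigcup_(A in [set: set nat]) ubase A = [set: Nstar].
Proof.
apply/seteqP; split => // p _; exists setT => //.
by case: p => p [[]].
Qed.

Lemma ubase_join (A B : set nat) (t : Nstar) : [set: set nat] A -> [set: set nat] B ->
  ubase A t -> ubase B t ->
  exists k, [/\ [set: set nat] k, ubase k t & ubase k `<=` ubase A `&` ubase B].
Proof.
move=> _ _ At Bt; exists (A `&` B); split => //.
  by case: t At Bt => p [[]] /= ? ? pI *; apply: pI.
move=> [q [[_ _ _ qU] _]] /= qAB; split; apply: qU qAB; by move=> x [].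
Qed.

HB.instance Definition _ := isBaseTopological.Build Nstar ubase_cover ubase_join.

Section Quot.
Variables (R : realType) (I : choiceType) (In : nat -> {fset I}).

Definition mu (x : nat -> R) (p : Nstar) : R :=
  lim ((fun n => x n / @cardI R I In n) @ proj1_sig p).

Definition sim (p q : Nstar) : bool :=
  `[< forall x, inXR In x -> mu x p = mu x q >].

Lemma sim_refl : reflexive sim.
Proof. by move=> p; apply/asboolP. Qed.
Lemma sim_sym : symmetric sim.
Proof.
by move=> p q; apply/asboolP/asboolP => h x hx; rewrite h.
Qed.
Lemma sim_trans : transitive sim.
Proof.
move=> q p r /asboolP h1 /asboolP h2; apply/asboolP => x hx.
by rewrite h1 // h2.
Qed.

Definition sim_equiv := EquivRel sim sim_refl sim_sym sim_trans.

Definition N0 := quotient_topology {eq_quot sim_equiv}%qT.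

Definition mu0 (x : nat -> R) (q : N0) : R := mu x (repr q).
End Quot.

Section Hilbert.
Variables (R : realType) (H : lmodType R[i]) (ip : H -> H -> R[i]).

Definition is_inner_product : Prop :=
  [/\ (forall a x y z, ip (a *: x + y) z = a * ip x z + ip y z),
      (forall x y, ip y x = (ip x y)^*),
      (forall x, 0 <= ip x x) &
      (forall x, ip x x = 0 -> x = 0)].
Definition hconv (u : nat -> H) (l : H) : Prop :=
  forall e : R[i], 0 < e -> exists N, forall n, (N <= n)%N -> ip (u n - l) (u n - l) < e.
Definition hcauchy (u : nat -> H) : Prop :=
  forall e : R[i], 0 < e -> exists N, forall n k, (N <= n)%N -> (N <= k)%N ->
    ip (u n - u k) (u n - u k) < e.
Definition is_separable_hilbert : Prop :=
  [/\ is_inner_product,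
      (forall u, hcauchy u -> exists l, hconv u l) &
      (exists d : nat -> H, forall x (e : R[i]), 0 < e -> exists n, ip (x - d n) (x - d n) < e)].

Variable I : choiceType.
Implicit Types (F : I -> H).

Definition in_cspan F (x : H) : Prop :=
  forall e : R[i], 0 < e -> exists (s : seq I) (c : I -> R[i]),
    ip (x - \sum_(i <- s) c i *: F i) (x - \sum_(i <- s) c i *: F i) < e.
Definition is_frame F : Prop :=
  exists A B : R[i], [/\ 0 < A, 0 < B & forall x, in_cspan F x ->
    (forall s : seq I, uniq s -> \sum_(i <- s) `|ip x (F i)| ^+ 2 <= B * ip x x) /\
    (forall c : R[i], c < A * ip x x ->
        exists s : seq I, uniq s /\ c < \sum_(i <- s) `|ip x (F i)| ^+ 2)].
Definition hsum_to (g : I -> H) (l : H) : Prop :=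
  forall e : R[i], 0 < e -> exists s0 : seq I, forall s : seq I, uniq s -> {subset s0 <= s} ->
    ip (\sum_(i <- s) g i - l) (\sum_(i <- s) g i - l) < e.
Definition is_canonical_dual F (Ft : I -> H) : Prop :=
  forall i, in_cspan F (Ft i) /\ hsum_to (fun j => ip (Ft i) (F j) *: F j) (F i).

Definition bframe (In : nat -> {fset I}) F (Ft : I -> H) : nat -> R :=
  fun n => complex.Re (\sum_(i <- In n) ip (F i) (Ft i)).
End Hilbert.

Definition frame_measure_fun (R : realType) (I : choiceType) (H : lmodType R[i])
  (ip : H -> H -> R[i]) (In : nat -> {fset I}) (V : topologicalType)
  (m : (nat -> R) -> V -> R) (F Ft : I -> H) : V -> R :=
  m (bframe ip In F Ft).

From HB Require Import structures.
From mathcomp Require Import all_boot all_order all_algebra finmap generic_quotient.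
From mathcomp Require Import all_classical all_reals all_analysis.
From mathcomp Require Import complex.
From mathcomp Require Import ring lra.
Import Order.TTheory GRing.Theory Num.Theory numFieldTopology.Exports numFieldNormedType.Exports.
Local Open Scope classical_set_scope.
Local Open Scope ring_scope.

Set Implicit Arguments.
Unset Strict Implicit.
Unset Printing Implicit Defensive.

(* The space X^R consists exactly of the sequences with |x_0| <= C |I_1| and
   |x_{n+1} - x_n| <= C |I_{n+1} \ I_n| ("dominated" sequences); b(F) is one of
   them because the frame bounds bound <f_i, f~_i> uniformly.  For a free
   ultrafilter p, x |-> mu(x)(p) is a positive linear functional normalised on
   (|I_n|)_n.  The closed sets {w | m(x)(w) <= mu(x)(p) + 1} have the finite
   intersection property, so compactness of W yields a point w_p with
   m(x)(w_p) = mu(x)(p) for all x; it is unique by separability, and p |-> w_p is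
   continuous on N^*.  This map factors injectively through N^0, and m restricted
   to its compact image is still a sequence measure function, since positivity of
   m(x) is tested at the points w_p alone; minimality makes the map onto W.  A
   continuous bijection from the compact N^0 onto the Hausdorff W is a
   homeomorphism. *)

Section Dominated.
Variables (R : realType) (I : choiceType) (In : nat -> {fset I}).
Local Notation c := (@cardI R I In).

Definition card_step (n : nat) : R := (#|` (In n.+1 `\` In n)%fset|)%:R.

Definition dominated_by (C : R) (x : nat -> R) : Prop :=
  `|x 0%N| <= C * c 0%N /\ forall n, `|x n.+1 - x n| <= C * card_step n.

Definition dominated : {pred nat -> R} :=
  fun x => `[< exists2 C, 0 < C & dominated_by C x >].

Lemma dominatedP x : reflect (exists2 C, 0 < C & dominated_by C x) (x \in dominated).
Proof. exact: asboolP. Qed.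

Lemma dominated_byD a C D x y : dominated_by C x -> dominated_by D y ->
  dominated_by (`|a| * C + D) (fun n => a * x n + y n).
Proof.
move=> [x0 xS] [y0 yS]; split=> [|n].
  by apply: le_trans (ler_normD _ _) _; rewrite mulrDl normrM -mulrA lerD ?ler_wpM2l.
rewrite (_ : _ - _ = a * (x n.+1 - x n) + (y n.+1 - y n)); last by ring.
by apply: le_trans (ler_normD _ _) _; rewrite mulrDl normrM -mulrA lerD ?ler_wpM2l.
Qed.

Lemma dominated_submod_closed : submod_closed dominated.
Proof.
split=> [|a x y /dominatedP[C C0 xC] /dominatedP[D D0 yD]].
  by apply/dominatedP; exists 1 => //; split=> [|n]; rewrite ?subrr normr0 mul1r ler0n.
apply/dominatedP; exists (`|a| * C + D); last exact: dominated_byD.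
by rewrite ltr_wpDl // mulr_ge0 // ltW.
Qed.

HB.instance Definition _ :=
  GRing.isSubmodClosed.Build R (nat -> R) dominated dominated_submod_closed.

Lemma dominated_norm x : x \in dominated -> (fun n => `|x n|) \in dominated.
Proof.
move=> /dominatedP[C C0 [x0 xS]]; apply/dominatedP; exists C => //.
by split=> [|n]; rewrite ?normr_id // (le_trans (ler_dist_dist _ _)).
Qed.

Lemma inX_dominated x : inX In x -> x \in dominated.
Proof.
move=> [/andP[x0 x0c] xS]; apply/dominatedP; exists 1 => //.
split=> [|n]; first by rewrite mul1r ger0_norm.
by have /andP[d0 dS] := xS n; rewrite mul1r ger0_norm.
Qed.

Lemma inXplus_dominated x : inXplus In x -> x \in dominated.
Proof.
by move=> [a [y [_ /inX_dominated yD ->]]]; exact (rpredZ a yD).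
Qed.

Hypothesis hnest : forall n, (In n `<=` In n.+1)%fset.

Lemma cardI_succ n : c n.+1 = c n + card_step n.
Proof.
rewrite /cardI /card_step (cardfsDS (hnest n)) natrB ?fsubset_leq_card //.
by rewrite addrC subrK.
Qed.

Lemma cardI_gt0_near i : (exists n, i \in In n) -> \forall n \near \oo, 0 < c n.
Proof.
move=> [N iN]; exists N => // n /= Nn; rewrite ltr0n cardfs_gt0; apply/fset0Pn.
exists i; rewrite -(subnKC Nn); elim: (n - N)%N => [|k IHk]; first by rewrite addn0.
by rewrite addnS; exact: (fsubsetP (hnest _)).
Qed.

Lemma inX_cardI : inX In c.
Proof.
split=> [|n]; first by rewrite ler0n lexx.
by rewrite cardI_succ addrC addKr ler0n lexx.
Qed.

Lemma dominated_cardI : c \in dominated.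
Proof.
apply/dominatedP; exists 1 => //; split=> [|n]; first by rewrite mul1r ger0_norm.
by rewrite cardI_succ addrC addKr mul1r ger0_norm.
Qed.

Lemma dominated_by_le C x : dominated_by C x -> forall n, `|x n| <= C * c n.
Proof.
move=> [x0 xS]; elim=> // n ih; rewrite cardI_succ mulrDr.
apply: le_trans (lerD ih (xS n)); rewrite addrC.
by have := ler_normD (x n.+1 - x n) (x n); rewrite subrK.
Qed.

Lemma dominated_ratio_bounded x :
  x \in dominated -> exists C, forall n, `|x n / c n| <= C.
Proof.
move=> /dominatedP[C C0 /dominated_by_le xC]; exists C => n.
have [->|cn0] := eqVneq (c n) 0; first by rewrite invr0 mulr0 normr0 ltW.
have cn : 0 < c n by rewrite lt_def cn0 ler0n.
by rewrite normrM normfV (gtr0_norm cn) ler_pdivrMr.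
Qed.

Lemma inXR_dominated x : inXR In x <-> x \in dominated.
Proof.
split=> [[y [z [/inXplus_dominated yD /inXplus_dominated zD ->]]]|].
  exact (rpredB yD zD).
move=> /dominatedP[C C0 [x0 xS]].
have C2 : 0 < 2 * C by rewrite mulr_gt0.
exists (fun n => x n + C * c n), (fun n => C * c n); split; last first.
- by apply/funext => n; rewrite addrK.
- by exists C, c; split=> //; [exact: ltW | exact: inX_cardI].
exists (2 * C), (fun n => (x n + C * c n) / (2 * C)); split.
- exact: ltW.
- split=> [|n]; apply/andP; split.
  + by rewrite divr_ge0 ?(ltW C2) //; move: x0; rewrite ler_norml; lra.
  + by rewrite ler_pdivrMr //; move: x0; rewrite ler_norml; lra.
  + rewrite -mulrBl divr_ge0 ?(ltW C2) // cardI_succ.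
    by move: (xS n); rewrite ler_norml; lra.
  + rewrite -mulrBl ler_pdivrMr // cardI_succ.
    by move: (xS n); rewrite ler_norml; lra.
- by apply/funext => n; rewrite [RHS]mulrC divfK // gt_eqF.
Qed.

End Dominated.

Lemma Nstar_filter (p : Nstar) : ProperFilter (proj1_sig p).
Proof. by case: p => P [[PT P0 PI PS] _] /=; constructor => //; constructor. Qed.
#[global] Existing Instance Nstar_filter.

Lemma Nstar_ultra (p : Nstar) (A : set nat) : proj1_sig p A \/ proj1_sig p (~` A).
Proof. by case: p => P [? [h ?]]; apply: h. Qed.

Lemma Nstar_free (p : Nstar) (A : set nat) : finite_set A -> ~ proj1_sig p A.
Proof. by case: p => P [? [? h]]; apply: h. Qed.

Lemma finite_set_oo (A : set nat) : finite_set A -> \forall n \near \oo, ~ A n.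
Proof.
move=> fA; exists (\max_(i <- fset_set A) i).+1 => // n /= Nn An.
have : n \in fset_set A by rewrite in_fset_set // inE.
by move=> /(@leq_bigmax_seq _ _ xpredT id)/(_ isT); rewrite leqNgt Nn.
Qed.

Lemma Nstar_le_oo (p : Nstar) : proj1_sig p `=>` \oo.
Proof.
move=> P [N _ NP]; have [//|pnP] := Nstar_ultra p P.
exfalso; apply: Nstar_free pnP; apply: sub_finite_set (finite_II N) => n /= nPn.
by rewrite ltnNge; apply/negP => /NP.
Qed.

Lemma Nstar_extend (G : set_system nat) : ProperFilter G -> G `=>` \oo ->
  exists p : Nstar, G `<=` proj1_sig p.
Proof.
move=> FG Goo; have [U [UU GU]] := ultraFilterLemma FG.
suff Ufree : free_ultrafilter U by exists (exist _ U Ufree).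
split; first split.
- exact: filterT.
- exact: filter_not_empty.
- by move=> A B; exact: filterI.
- by move=> A B; exact: filterS.
split=> [A|A /finite_set_oo /Goo /GU UnA UA]; first exact: in_ultra_setVsetC.
by apply: (filter_not_empty U); rewrite -(setICr A); exact: filterI.
Qed.

Lemma Nstar_of_unbounded (A : set nat) :
  (forall N, exists2 n, (N <= n)%N & A n) -> exists p : Nstar, proj1_sig p A.
Proof.
move=> Aunb; pose G B := exists N, forall n, (N <= n)%N -> A n -> B n.
have FG : ProperFilter G.
  apply: Build_ProperFilter_ex => [B [N NB]|].
    by have [n Nn An] := Aunb N; exists n; exact: NB.
  constructor; first by exists 0%N.
    move=> B C [N1 h1] [N2 h2]; exists (maxn N1 N2) => n.
    by rewrite geq_max => /andP[n1 n2] An; split; [exact: h1 | exact: h2].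
  by move=> B C BC [N h]; exists N => n Nn An; apply: BC; exact: h.
have [|p Gp] := Nstar_extend FG; last by exists p; apply: Gp; exists 0%N.
by move=> B [N _ NB]; exists N => n Nn _; exact: NB.
Qed.

(* Instance resolution does not see the filter of [nbhs p] through the base
   topology of [Nstar]. *)
#[global] Instance Nstar_nbhs_filter (p : Nstar) : Filter (nbhs p) := nbhs_filter p.

Lemma ubase_open (A : set nat) : open (ubase A : set Nstar).
Proof. by exists [set A] => //; rewrite bigcup_set1. Qed.

Lemma Nstar_nbhs (p : Nstar) (B : set Nstar) :
  nbhs p B -> exists2 A, proj1_sig p A & ubase A `<=` B.
Proof.
rewrite nbhsE /=; move=> [U [[D _ DU] Up] UB]; move: Up; rewrite -DU; move=> [A DA pA].
by exists A => // q qA; apply: UB; rewrite -DU; exists A.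
Qed.

Lemma Nstar_compact : compact [set: Nstar].
Proof.
move=> F PF _; pose G A := F (ubase A).
have ubaseT : ubase setT = setT.
  by apply/seteqP; split => // q _; exact: (@filterT _ _ (Nstar_filter q)).
have ubase0 : ubase set0 = set0.
  by apply/seteqP; split => // q /(filter_not_empty (proj1_sig q)).
have FG : ProperFilter G.
  apply: Build_ProperFilter_ex => [A GA|].
    apply: contrapT => nA.
    have A0 : A = set0 by apply/seteqP; split=> // n An; apply: nA; exists n.
    by move: GA; rewrite /G A0 ubase0; exact: filter_not_empty.
  constructor; first by rewrite /G ubaseT; exact: filterT.
    move=> A B GA GB; rewrite /G in GA GB *.
    by apply: filterS (filterI GA GB) => q [qA qB]; exact: filterI.
  by move=> A B AB; rewrite /G; apply: filterS => q; exact: filterS.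
have [|p Gp] := Nstar_extend FG.
  move=> A ooA; rewrite /G (_ : ubase A = [set: Nstar]); first exact: filterT.
  by apply/seteqP; split => // q _; exact: Nstar_le_oo.
exists p; split => // B N FB /Nstar_nbhs[A pA AN]; apply: contrapT => nBN.
have GnA : G (~` A).
  apply: filterS FB => q Bq; have [qA|//] := Nstar_ultra q A.
  by exfalso; apply: nBN; exists q; split => //; exact: AN.
by apply: (filter_not_empty (proj1_sig p)); rewrite -(setICr A); exact: filterI (Gp _ GnA).
Qed.

Section NstarLimit.
Variable R : realType.
Implicit Types (u : nat -> R) (p : Nstar).

Lemma Nstar_cvg u p : (exists C, forall n, `|u n| <= C) ->
  u @ proj1_sig p --> lim (u @ proj1_sig p).
Proof.
move=> [C uC]; apply/cvg_ex.
have [|l [_ lclu]] := @segment_compact R (- C) C (u @ proj1_sig p) _.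
  by apply: filterS (@filterT _ _ (Nstar_filter p)) => n _ /=; rewrite in_itv /= -ler_norml.
exists l => B /= Bl; have [//|puB] := Nstar_ultra p (u @^-1` B).
by have [t [? ?]] := lclu (~` B) B puB Bl.
Qed.

Lemma Nstar_lim_continuous u : (exists C, forall n, `|u n| <= C) ->
  continuous (fun p : Nstar => lim (u @ proj1_sig p)).
Proof.
move=> ub p; apply/cvgrPdist_le => e e0.
have pnbhs : nbhs p (ubase [set n | `|lim (u @ proj1_sig p) - u n| <= e]).
  apply: open_nbhs_nbhs; split; first exact: ubase_open.
  exact: cvgr_dist_le _ _ (Nstar_cvg (p := p) ub) _ e0.
apply: filterS pnbhs => q /= qA.
have closed_ball_e : closed [set t : R | `|lim (u @ proj1_sig p) - t| <= e].
  by have := @closed_ball_closed _ R^o (lim (u @ proj1_sig p)) e; rewrite closed_ballE.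
exact: (closed_cvg _ closed_ball_e qA _ (Nstar_cvg (p := q) ub)).
Qed.

Lemma limn_einf_ge0P u : (0 <= limn_einf (fun n => (u n)%:E))%E <->
  forall e, 0 < e -> \forall n \near \oo, - e <= u n.
Proof.
have supE : limn_einf (fun n => (u n)%:E) = ereal_sup (range (einfs (fun n => (u n)%:E))).
  by rewrite limn_einf_lim; apply/cvg_lim => //; exact: cvg_einfs_sup.
split=> [u0 e e0|ue].
  have : ((- e)%:E < ereal_sup (range (einfs (fun n => (u n)%:E))))%E.
    by rewrite -supE; apply: lt_le_trans u0; rewrite lte_fin oppr_lt0.
  move=> /ereal_sup_gt[_ [N _ <-] NeN]; exists N => // n /= Nn.
  rewrite -lee_fin; apply: (le_trans (ltW NeN)).
  by apply: ereal_inf_lbound; exists n.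
rewrite limn_einf_lim; apply/lee_subgt0Pr => e e0; rewrite sub0e.
apply: lime_ge; first exact: is_cvg_einfs.
have [N _ Ne] := ue e e0; exists N => // k /= Nk; apply: le_ereal_inf_tmp => _ [n /= kn <-].
by rewrite lee_fin; apply: Ne; exact: leq_trans Nk kn.
Qed.

Lemma limn_einf_ge0_Nstar u : (exists C, forall n, `|u n| <= C) ->
  (0 <= limn_einf (fun n => (u n)%:E))%E <-> forall p, 0 <= lim (u @ proj1_sig p).
Proof.
move=> ub; rewrite limn_einf_ge0P; split=> [ue p|plim e e0].
  apply/ler_addgt0Pr => e e0; rewrite -lerBlDr sub0r.
  by apply: limr_ge; [exact: Nstar_cvg | exact: Nstar_le_oo (ue e e0)].
apply: contrapT => une.
have [|p pA] := @Nstar_of_unbounded [set n | u n < - e].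
  move=> N; apply: contrapT => nN; apply: une; exists N => // n /= Nn.
  by rewrite leNgt; apply/negP => une'; apply: nN; exists n.
have := plim p; apply/negP; rewrite -ltNge.
apply: (@le_lt_trans _ _ (- e)); last by rewrite oppr_lt0.
apply: limr_le; first exact: Nstar_cvg.
by apply: filterS pA => n /ltW.
Qed.

End NstarLimit.

Section Quotient.
Variables (R : realType) (I : choiceType) (In : nat -> {fset I}).

Lemma repr_pi_sim (p : Nstar) : sim R In (repr (\pi_(N0 R In) p)%qT) p.
Proof. by apply/(@eqmodP _ (sim_equiv R In)); rewrite reprK. Qed.

Lemma N0_eq_sim (q1 q2 : N0 R In) : sim R In (repr q1) (repr q2) -> q1 = q2.
Proof. by move=> /(@eqmodP _ (sim_equiv R In)); rewrite !reprK. Qed.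

Lemma N0_compact : compact [set: N0 R In].
Proof.
have -> : [set: N0 R In] = (\pi_(N0 R In))%qT @` [set: Nstar].
  by apply/seteqP; split => // q _; exists (repr q) => //; rewrite reprK.
exact: continuous_compact (continuous_subspaceT pi_continuous) Nstar_compact.
Qed.
End Quotient.

Section LinearOn.
Variables (R : pzRingType) (V : lmodType R) (S : submodClosed V) (f : V -> R).

Definition linear_on := forall a, {in S &, forall x y, f (a *: x + y) = a * f x + f y}.

Hypothesis f_lin : linear_on.

Lemma linear_on0 : f 0 = 0.
Proof.
have := f_lin 1 (rpred0 S) (rpred0 S); rewrite scaler0 addr0 mul1r.
by move/eqP; rewrite -subr_eq subrr eq_sym => /eqP.
Qed.

Lemma linear_onZ a x : x \in S -> f (a *: x) = a * f x.
Proof. by move=> xS; rewrite -[a *: x]addr0 f_lin ?rpred0 // linear_on0 addr0. Qed.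

Lemma linear_onD x y : x \in S -> y \in S -> f (x + y) = f x + f y.
Proof. by move=> xS yS; rewrite -[x]scale1r f_lin // mul1r scale1r. Qed.

Lemma linear_onB x y : x \in S -> y \in S -> f (x - y) = f x - f y.
Proof.
move=> xS yS; rewrite addrC -scaleN1r f_lin ?rpredN //.
by rewrite mulN1r addrC.
Qed.

Lemma linear_on_sum (T : eqType) (s : seq T) (F : T -> V) :
  {in s, forall i, F i \in S} -> f (\sum_(i <- s) F i) = \sum_(i <- s) f (F i).
Proof.
move=> FS; rewrite big_seq [RHS]big_seq.
suff [] : \sum_(i <- s | i \in s) F i \in S /\
    f (\sum_(i <- s | i \in s) F i) = \sum_(i <- s | i \in s) f (F i) by [].
apply: (big_ind2 (fun u r => u \in S /\ f u = r)) => [|u r w t [uS <-] [wS <-]|i /FS iS].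
- by rewrite rpred0 linear_on0.
- by rewrite rpredD // linear_onD.
- by [].
Qed.

End LinearOn.

Section UltrafilterMean.
Variables (R : realType) (I : choiceType) (In : nat -> {fset I}).
Hypothesis hnest : forall n, (In n `<=` In n.+1)%fset.
Hypothesis hpos : \forall n \near \oo, 0 < cardI R In n.
Local Notation c := (@cardI R I In).
Local Notation dominated := (@dominated R I In).
Local Notation mu := (@mu R I In).
Implicit Types (x y : nat -> R) (p : Nstar).

Lemma mu_cvg x p : x \in dominated -> (fun n => x n / c n) @ proj1_sig p --> mu x p.
Proof. by move=> /(dominated_ratio_bounded hnest) /Nstar_cvg. Qed.

Lemma mu_continuous x : x \in dominated -> continuous (mu x).
Proof. by move=> /(dominated_ratio_bounded hnest) /Nstar_lim_continuous. Qed.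

Lemma mu_cvg_eq x p l : (fun n => x n / c n) @ proj1_sig p --> l -> mu x p = l.
Proof. exact: cvg_lim. Qed.

Lemma mu_linear p : linear_on dominated (mu^~ p).
Proof.
move=> a x y xD yD; apply: mu_cvg_eq.
have -> : (fun n => (a *: x + y) n / c n) = (fun n => a * (x n / c n) + y n / c n).
  by apply/funext => n; rewrite mulrDl mulrA.
by apply: cvgD; [apply: cvgMr; exact: mu_cvg | exact: mu_cvg].
Qed.

Lemma mu_ge0 x p : x \in dominated -> (forall n, 0 <= x n) -> 0 <= mu x p.
Proof.
move=> xD x0; apply: limr_ge; first exact: mu_cvg p xD.
by apply: nearW => n; rewrite divr_ge0.
Qed.

Lemma mu_norm x p : x \in dominated -> mu (fun n => `|x n|) p = `|mu x p|.
Proof.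
move=> xD; apply: mu_cvg_eq; rewrite (_ : (fun n => _) = (fun n => `|x n / c n|)).
  by apply: cvg_norm; exact: mu_cvg.
by apply/funext => n; rewrite normrM normfV (ger0_norm (ler0n _ _)).
Qed.

Lemma mu_cardI p : mu c p = 1.
Proof.
apply: mu_cvg_eq; apply: cvg_near_cst; apply: Nstar_le_oo.
by apply: filterS hpos => n /= cn; rewrite divff // gt_eqF.
Qed.

Lemma seq_leqq0_mu x : x \in dominated ->
  seq_leqq In (fun=> 0) x <-> forall p, 0 <= mu x p.
Proof.
move=> /(dominated_ratio_bounded hnest) /limn_einf_ge0_Nstar <-.
by rewrite /seq_leqq; under eq_fun do rewrite subr0.
Qed.

End UltrafilterMean.

Lemma compact_bigcap_subset (T : topologicalType) (J : choiceType) (D : set J)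
    (f : J -> set T) (O : set T) :
  compact [set: T] -> (forall j, D j -> closed (f j)) -> open O ->
  \bigcap_(j in D) f j `<=` O ->
  exists2 s : {fset J}, {subset s <= D} & \bigcap_(j in [set` s]) f j `<=` O.
Proof.
move=> cT fcl oO DO; apply: contrapT => nfin.
have escape (s : {fset J}) : {subset s <= D} -> exists t, ~ O t /\ forall j, j \in s -> f j t.
  move=> sD; apply: contrapT => nt; apply: nfin; exists s => // t st.
  by apply: contrapT => nOt; apply: nt; exists t; split=> // j js; exact: st.
have [[j Dj]|D0] := pselect (exists j, D j); last first.
  have [k|t [nOt _]] := escape fset0; first by rewrite inE.
  by apply: nOt; apply: DO => j Dj; exfalso; apply: D0; exists j.
have fi : finI D (fun j => f j `&` ~` O).
  by move=> s sD; have [t [nOt st]] := escape s sD; exists t => k /st.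
have [|t [_ tcl]] := cT _ (finI_filter fi); first exact: (@filterT _ _ (finI_filter fi)).
have inF k : D k -> (f k `&` ~` O) t.
  move=> Dk; apply: (closedI (fcl k Dk) (open_closedC oO)) => B Bt.
  by apply: tcl Bt; exists (f k `&` ~` O); [exact: finI_from1 | ].
by have [_] := inF j Dj; apply; apply: DO => k /inF[].
Qed.

Lemma continuous_cancel_compact (S T : topologicalType) (f : S -> T) (g : T -> S) :
  compact [set: S] -> hausdorff_space T -> continuous f ->
  cancel f g -> cancel g f -> continuous g.
Proof.
move=> cS hT cf fK gK; apply/continuous_closedP => C cC.
have -> : g @^-1` C = f @` C.
  apply/seteqP; split=> [t Cgt|_ [s Cs <-]] /=; last by rewrite fK.
  by exists (g t) => //; rewrite gK.
apply: compact_closed hT _; apply: continuous_compact; first exact: continuous_subspaceT.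
exact: subclosed_compact cC cS _.
Qed.

Section SequenceMeasure.
Variables (R : realType) (I : choiceType) (In : nat -> {fset I}).
Hypothesis hnest : forall n, (In n `<=` In n.+1)%fset.
Variables (W : topologicalType) (m : (nat -> R) -> W -> R).
Hypothesis hm : seq_measure_fun In m.
Local Notation c := (@cardI R I In).
Local Notation dominated := (@dominated R I In).
Local Notation mu := (@mu R I In).
Implicit Types (x y : nat -> R) (p : Nstar) (v : W).

Lemma m_continuous x : x \in dominated -> continuous (m x).
Proof.
move=> /(inXR_dominated hnest) xR; case: hm => mcont _ _ _ _.
by apply/continuous_subspace_setT; exact: mcont.
Qed.

Lemma m_linear v : linear_on dominated (m^~ v).
Proof.
move=> a x y /(inXR_dominated hnest) xR /(inXR_dominated hnest) yR.
by case: hm => _ mlin _ _ _; exact: mlin.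
Qed.

Lemma m_cardI v : m c v = 1.
Proof. by case: hm => _ _ _ _; apply. Qed.

Lemma m_le_iff x y : x \in dominated -> y \in dominated ->
  seq_leqq In x y <-> forall v, m x v <= m y v.
Proof.
move=> xD yD; have /(inXR_dominated hnest) := rpredB yD xD.
move=> [y' [z' [y'X z'X yx]]].
have yxn n : y n - x n = y' n - z' n by rewrite -[LHS]/((y - x) n) yx.
have -> : seq_leqq In x y = seq_leqq In z' y'.
  by rewrite /seq_leqq; under eq_fun do rewrite yxn.
have y'D := inXplus_dominated y'X; have z'D := inXplus_dominated z'X.
have myx v : m y v - m x v = m y' v - m z' v.
  rewrite -!(linear_onB (m_linear v)) //.
  by congr m; apply/funext => n; exact: yxn.
case: hm => _ _ _ mle _; rewrite -(mle _ _ z'X y'X).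
split=> le v; first by rewrite -subr_ge0 myx subr_ge0; exact: le.
by move=> _; rewrite -subr_ge0 -myx subr_ge0.
Qed.

Lemma m_ge0E x : x \in dominated -> (forall v, 0 <= m x v) <-> forall p, 0 <= mu x p.
Proof.
move=> xD; rewrite -(seq_leqq0_mu hnest) // m_le_iff ?rpred0 //.
by split=> le v; [rewrite (linear_on0 (m_linear v)) | rewrite -(linear_on0 (m_linear v))].
Qed.

Lemma m_leE x y : x \in dominated -> y \in dominated ->
  (forall v, m x v <= m y v) <-> forall p, mu x p <= mu y p.
Proof.
move=> xD yD; have yxD := rpredB yD xD.
have mB v : m (y - x) v = m y v - m x v := linear_onB (m_linear v) yD xD.
have muB p : mu (y - x) p = mu y p - mu x p := linear_onB (mu_linear hnest p) yD xD.
split=> le.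
  move=> p; rewrite -subr_ge0 -muB; move: p; apply/(m_ge0E yxD) => v.
  by rewrite mB subr_ge0.
move=> v; rewrite -subr_ge0 -mB; move: v; apply/(m_ge0E yxD) => p.
by rewrite muB subr_ge0.
Qed.

Lemma m_ge0 x : x \in dominated -> (forall n, 0 <= x n) -> forall v, 0 <= m x v.
Proof. by move=> xD x0; apply/m_ge0E => // p; exact: mu_ge0. Qed.

Lemma m_le x y : x \in dominated -> y \in dominated -> (forall n, x n <= y n) ->
  forall v, m x v <= m y v.
Proof.
move=> xD yD xy v; rewrite -subr_ge0 -(linear_onB (m_linear v)) //.
by apply: m_ge0 => [|n]; rewrite ?rpredB // subr_ge0.
Qed.

Lemma m_norm_le x v : x \in dominated -> `|m x v| <= m (fun n => `|x n|) v.
Proof.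
move=> xD; have nxD := dominated_norm xD.
rewrite ler_norml -mulN1r -(linear_onZ (m_linear v)) //.
rewrite !m_le ?rpredZ // => n; first exact: ler_norm.
by rewrite -[_ n]/(-1 * `|x n|) mulN1r lerNl ler_normr lexx orbT.
Qed.

Lemma m_eq_of_le_add1 v (g : (nat -> R) -> R) :
  (forall a x, x \in dominated -> g (a *: x) = a * g x) ->
  {in dominated, forall x, m x v <= g x + 1} -> {in dominated, forall x, m x v = g x}.
Proof.
move=> gZ le1; have le x : x \in dominated -> m x v <= g x.
  move=> xD; apply/ler_addgt0Pr => e e0; have ie0 : 0 < e^-1 by rewrite invr_gt0.
  have := le1 _ (rpredZ e^-1 xD); rewrite (linear_onZ (m_linear v)) // gZ //.
  by move=> le1e; rewrite -(ler_pM2l ie0) mulrDr mulVf ?gt_eqF.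
move=> x xD; apply/eqP; rewrite eq_le le //= -lerN2 -(mulN1r (m x v)) -(mulN1r (g x)).
by rewrite -gZ // -(linear_onZ (m_linear v)) // le ?rpredZ.
Qed.

End SequenceMeasure.

Section NstarPoint.
Variables (R : realType) (I : choiceType) (In : nat -> {fset I}).
Hypothesis hnest : forall n, (In n `<=` In n.+1)%fset.
Hypothesis hpos : \forall n \near \oo, 0 < cardI R In n.
Variables (W : topologicalType) (m : (nat -> R) -> W -> R).
Hypothesis hm : seq_measure_fun In m.
Hypothesis hWc : compact [set: W].
Local Notation c := (@cardI R I In).
Local Notation dominated := (@dominated R I In).
Local Notation mu := (@mu R I In).
Implicit Types (x y : nat -> R) (p : Nstar) (v w : W).

Lemma closed_m_le x r : x \in dominated -> closed [set w | m x w <= r].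
Proof.
by move=> xD; exact: (continuous_closedP _).1 (m_continuous hnest hm xD) _ (@closed_le _ r).
Qed.

(* Finite intersection property of the closed sets [m x <= mu x p + 1]; the slack
   [1] is removed afterwards by scaling, see [m_eq_of_le_add1]. *)
Lemma Nstar_point_approx p (s : {fset nat -> R}) : {subset s <= dominated} ->
  exists w, forall x, x \in s -> m x w <= mu x p + 1.
Proof.
move=> sD; pose y x := x - mu x p *: c.
have yD x : x \in s -> y x \in dominated.
  by move=> /sD xD; rewrite rpredB ?rpredZ ?dominated_cardI.
have nyD x : x \in s -> (fun n => `|y x n|) \in dominated.
  by move=> /yD; exact: dominated_norm.
pose g := \sum_(x <- s) (fun n => `|y x n|).
have gD : g \in dominated by rewrite /g big_seq rpred_sum.
have mu_g : mu g p = 0.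
  rewrite (linear_on_sum (mu_linear hnest p) nyD) big_seq big1 // => x xs.
  rewrite mu_norm ?yD // (linear_onB (mu_linear hnest p)) ?rpredZ ?dominated_cardI ?sD //.
  rewrite (linear_onZ (mu_linear hnest p)) ?dominated_cardI // mu_cardI //.
  by rewrite mulr1 subrr normr0.
have [w gw] : exists w, m g w < 1.
  apply: contrapT => /forallNP g1; suff : mu c p <= mu g p by rewrite mu_g mu_cardI // ler10.
  apply: (m_leE hnest hm (dominated_cardI R hnest) gD).1 => v.
  by rewrite (m_cardI hm) leNgt; apply/negP; exact: g1.
exists w => x xs; rewrite -lerBlDl.
have -> : m x w - mu x p = m (y x) w.
  rewrite (linear_onB (m_linear hnest hm w)) ?rpredZ ?dominated_cardI ?sD //.
  by rewrite (linear_onZ (m_linear hnest hm w)) ?dominated_cardI // m_cardI // mulr1.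
apply: le_trans (ler_norm _) _; apply: le_trans (m_norm_le hnest hm _ (yD x xs)) _.
apply: ltW; apply: le_lt_trans gw; rewrite (linear_on_sum (m_linear hnest hm w) nyD).
rewrite (bigD1_seq x) ?fset_uniq //=; apply: ler_wpDr => //.
rewrite big_seq_cond; apply: sumr_ge0 => z /andP[zs _].
by apply: (m_ge0 hnest hm) => [|n]; [exact: nyD | exact: normr_ge0].
Qed.

Lemma exists_Nstar_point p : exists w, {in dominated, forall x, m x w = mu x p}.
Proof.
have [w wZ] : \bigcap_(x in [set x | x \in dominated]) [set w | m x w <= mu x p + 1] !=set0.
  apply/set0P/negP => /eqP; rewrite -subset0.
  move=> /(compact_bigcap_subset hWc (fun x xD => closed_m_le xD) open0)[s sD sZ].
  have [|w ws] := Nstar_point_approx p (s := s); first by move=> x /sD; rewrite inE.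
  by apply: (sZ w) => x /= xs; exact: ws.
exists w; apply: (m_eq_of_le_add1 hnest hm) => [a x xD|x xD].
  exact: (linear_onZ (mu_linear hnest p)).
exact: wZ.
Qed.

Definition Nstar_point p : W := projT1 (cid (exists_Nstar_point p)).

Lemma Nstar_pointE p x : x \in dominated -> m x (Nstar_point p) = mu x p.
Proof. by move=> xD; rewrite /Nstar_point; case: cid => w /= ->. Qed.

Hypothesis hsep : smf_separable In m.

Lemma m_separates v w : {in dominated, forall x, m x v = m x w} -> v = w.
Proof.
move=> vw; apply: contrapT => /hsep[x [/(inXR_dominated hnest) xD]].
by apply; exact: vw.
Qed.

Lemma Nstar_point_continuous : continuous Nstar_point.
Proof.
move=> p O; rewrite nbhsE /=; move=> [U [oU Up] UO].
have capU : \bigcap_(x in [set x | x \in dominated])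
    [set v | m x v <= m x (Nstar_point p) + 1] `<=` U.
  move=> v vZ; suff -> : v = Nstar_point p by [].
  apply: m_separates; apply: (m_eq_of_le_add1 hnest hm) => [a x xD|x xD].
    exact: (linear_onZ (m_linear hnest hm _)).
  exact: vZ.
have [s sD sU] := compact_bigcap_subset hWc (fun x xD => closed_m_le xD) oU capU.
have sD' x : x \in s -> x \in dominated by move=> /sD; rewrite inE.
have near_s : nbhs p (\bigcap_(x in [set` s]) [set q | mu x q < mu x p + 1]).
  apply: filter_bigI => x /sD' xD.
  have := cvgr_lt _ (@mu_continuous _ _ _ hnest x xD p) (mu x p + 1).
  by rewrite ltrDl ltr01; apply.
apply: filterS near_s => q qs; apply: UO; apply: sU => x xs /=.
by rewrite !Nstar_pointE ?sD' //; apply: ltW; exact: qs.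
Qed.

End NstarPoint.

Section QuotientPoint.
Variables (R : realType) (I : choiceType) (In : nat -> {fset I}).
Hypothesis hnest : forall n, (In n `<=` In n.+1)%fset.
Hypothesis hpos : \forall n \near \oo, 0 < cardI R In n.
Variables (W : topologicalType) (m : (nat -> R) -> W -> R).
Hypothesis hm : seq_measure_fun In m.
Hypothesis hWc : compact [set: W].
Hypothesis hsep : smf_separable In m.
Local Notation dominated := (@dominated R I In).
Local Notation mu := (@mu R I In).
Local Notation Nstar_point := (Nstar_point hnest hpos hm hWc).
Implicit Types (x y : nat -> R) (p : Nstar) (q : N0 R In).

Lemma Nstar_point_sim p1 p2 : sim R In p1 p2 -> Nstar_point p1 = Nstar_point p2.
Proof.
move=> /asboolP p12; apply: (m_separates hnest hsep) => x xD.
by rewrite !Nstar_pointE // p12 //; exact/(inXR_dominated hnest).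
Qed.

Definition N0_point q : W := Nstar_point (repr q).

Lemma N0_pointE q x : x \in dominated -> m x (N0_point q) = mu0 x q.
Proof. exact: Nstar_pointE. Qed.

Lemma N0_point_continuous : continuous N0_point.
Proof.
apply/quotient_continuous; rewrite (_ : N0_point \o _ = Nstar_point).
  exact: Nstar_point_continuous.
by apply/funext => p /=; apply: Nstar_point_sim; exact: repr_pi_sim.
Qed.

Lemma N0_point_inj : injective N0_point.
Proof.
move=> q1 q2 q12; apply: N0_eq_sim; apply/asboolP => x /(inXR_dominated hnest) xD.
by rewrite -!(Nstar_pointE hnest hpos hm hWc) //; congr m.
Qed.

Lemma smf_on_Nstar_range : smf_on In (range Nstar_point) m.
Proof.
have range_le x y : x \in dominated -> y \in dominated ->
    (forall v, range Nstar_point v -> m x v <= m y v) -> forall v, m x v <= m y v.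
  move=> xD yD le; apply/(m_leE hnest hm) => // p.
  by rewrite -!(Nstar_pointE hnest hpos hm hWc) //; apply: le; exists p.
have [_ mlin meq mle m1] := hm; split.
- move=> x /(inXR_dominated hnest) xD.
  exact: continuous_subspaceT (m_continuous hnest hm xD).
- by move=> a x y xR yR v _; exact: mlin.
- move=> x y xR yR; rewrite -meq //; split=> [eq v _|eq v _]; last exact: eq.
  have /(inXR_dominated hnest) xD := xR; have /(inXR_dominated hnest) yD := yR.
  by apply/eqP; rewrite eq_le !range_le // => w /eq ->.
- move=> x y xX yX; rewrite -mle //; split=> [le v _|le v _]; last exact: le.
  by apply: range_le; rewrite ?inXplus_dominated.
- by move=> v _; exact: m1.
Qed.

Lemma N0_point_surj : ~ smf_reducible In m -> forall w, exists q, N0_point q = w.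
Proof.
move=> hred w; apply: contrapT => nw; apply: hred; exists (range Nstar_point); split.
- apply: continuous_compact Nstar_compact; apply: continuous_subspaceT.
  exact: Nstar_point_continuous.
- split=> // /(_ w Logic.I)[p _ pw]; apply: nw; exists (\pi_(N0 R In) p)%qT.
  by rewrite -pw; apply: Nstar_point_sim; exact: repr_pi_sim.
- exact: smf_on_Nstar_range.
Qed.

End QuotientPoint.

Section InnerProduct.
(* [ring_scope] is reopened last so that [x^*] is [Num.conj x], as in [is_inner_product]. *)
Local Open Scope complex_scope.
Local Open Scope ring_scope.
Variables (R : realType) (H : lmodType R[i]) (ip : H -> H -> R[i]).
Hypothesis hip : is_inner_product ip.
Local Notation Re := complex.Re.
Local Notation nsq x := (Re (ip x x)).

Lemma Re_realM (a : R) (z : R[i]) : Re (a%:C * z) = a * Re z.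
Proof. by case: z => u v /=; rewrite mul0r subr0. Qed.

Lemma ipDl a x y z : ip (a *: x + y) z = a * ip x z + ip y z.
Proof. by case: hip. Qed.

Lemma ipC x y : ip y x = (ip x y)^*.
Proof. by case: hip. Qed.

Lemma ip_ge0 x : 0 <= ip x x.
Proof. by case: hip. Qed.

Lemma ip0l z : ip 0 z = 0.
Proof.
have := ipDl 1 0 0 z; rewrite scaler0 addr0 mul1r => /eqP.
by rewrite -subr_eq subrr eq_sym => /eqP.
Qed.

Lemma ipZl a x z : ip (a *: x) z = a * ip x z.
Proof. by rewrite -[a *: x]addr0 ipDl ip0l addr0. Qed.

Lemma ipBl x y z : ip (x - y) z = ip x z - ip y z.
Proof. by rewrite addrC -scaleN1r ipDl mulN1r addrC. Qed.

Lemma ipZr a x z : ip z (a *: x) = a^* * ip z x.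
Proof. by rewrite ipC ipZl rmorphM /= -ipC. Qed.

Lemma ipBr x y z : ip z (x - y) = ip z x - ip z y.
Proof. by rewrite ipC ipBl rmorphB /= -!ipC. Qed.

Lemma ip_suml (T : Type) (s : seq T) (a : T -> R[i]) (G : T -> H) z :
  ip (\sum_(j <- s) a j *: G j) z = \sum_(j <- s) a j * ip (G j) z.
Proof.
elim: s => [|j s IHs]; first by rewrite !big_nil ip0l.
by rewrite !big_cons ipDl IHs.
Qed.

Lemma ipxx x : ip x x = (nsq x)%:C.
Proof. by have := ip_ge0 x; case: (ip x x) => u v; rewrite lecE /= => /andP[/eqP ->]. Qed.

Lemma nsq_ge0 x : 0 <= nsq x.
Proof. by have := ip_ge0 x; rewrite ipxx lecR. Qed.

Lemma Re_ipC x y : Re (ip y x) = Re (ip x y).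
Proof. by rewrite ipC; case: (ip x y). Qed.

Lemma nsq_scaleB (a : R) x y :
  nsq (a%:C *: x - y) = a ^+ 2 * nsq x - 2 * a * Re (ip x y) + nsq y.
Proof.
rewrite ipBl !ipBr !ipZl !ipZr conj_Creal ?complex_real // !raddfB /= !Re_realM.
by rewrite (Re_ipC x y); ring.
Qed.

Lemma Re_ip_le x y : 2 * Re (ip x y) <= nsq x + nsq y.
Proof. by have := nsq_ge0 (1%:C *: x - y); rewrite nsq_scaleB; lra. Qed.

Lemma norm_Re_ip_le x y : 2 * `|Re (ip x y)| <= nsq x + nsq y.
Proof.
have := Re_ip_le x y; have := nsq_ge0 ((-1)%:C *: x - y).
rewrite nsq_scaleB; case: (ler0P (Re (ip x y))) => _; lra.
Qed.

Lemma nsqN x : nsq (- x) = nsq x.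
Proof. by rewrite -scaleN1r ipZl ipZr rmorphN1 mulN1r mulN1r opprK. Qed.

Lemma nsqD_le x y : nsq (x + y) <= 2 * nsq x + 2 * nsq y.
Proof.
have := norm_Re_ip_le x (- y); rewrite nsqN.
have := nsq_scaleB 1 x (- y); rewrite scale1r opprK => ->.
have := ler_norm (- Re (ip x (- y))); rewrite normrN nsqN expr1n; lra.
Qed.

Lemma ip_expansion_self (T : Type) (s : seq T) (G : T -> H) x :
  ip (\sum_(j <- s) ip x (G j) *: G j) x = \sum_(j <- s) `|ip x (G j)| ^+ 2.
Proof. by rewrite ip_suml; apply: eq_bigr => j _; rewrite normCK -ipC. Qed.

Lemma nsq_le_of_Re_ip (a M : R) x : 0 < a ->
  (forall r, r < a * nsq x -> exists2 g, nsq g <= M & r < Re (ip g x)) ->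
  nsq x <= M / a ^+ 2.
Proof.
move=> a0 hg; rewrite ler_pdivlMr ?exprn_gt0 // leNgt; apply/negP => Mlt.
pose r := (a ^+ 2 * nsq x + M) / (2 * a).
have r2a : 2 * a * r = a ^+ 2 * nsq x + M.
  by rewrite /r mulrC divfK // mulf_neq0 // gt_eqF.
have [|g gM rg] := hg r; first by rewrite /r ltr_pdivrMr ?mulr_gt0 //; nra.
have := nsq_ge0 (a%:C *: x - g); rewrite nsq_scaleB (Re_ipC g x).
have : 2 * a * r < 2 * a * Re (ip g x) by rewrite ltr_pM2l ?mulr_gt0.
lra.
Qed.

Section Frame.
Variables (I : choiceType) (F Ft : I -> H) (a b : R).
Hypotheses (a0 : 0 < a) (b0 : 0 <= b).
Hypothesis frame_upper : forall x, in_cspan ip F x -> forall s, uniq s ->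
  \sum_(i <- s) `|ip x (F i)| ^+ 2 <= b%:C * ip x x.
Hypothesis frame_lower : forall x, in_cspan ip F x -> forall c, c < a%:C * ip x x ->
  exists s, uniq s /\ c < \sum_(i <- s) `|ip x (F i)| ^+ 2.
Hypothesis dual : is_canonical_dual ip F Ft.

Lemma frame_nsq_le i : nsq (F i) <= b.
Proof.
have Fspan : in_cspan ip F (F i).
  by move=> e e0; exists [:: i], (fun=> 1); rewrite big_seq1 scale1r subrr ip0l.
have := frame_upper Fspan (s := [:: i]) isT.
rewrite big_seq1 normCK ipxx conj_Creal ?complex_real // -!rmorphM lecR => le /=.
rewrite leNgt; apply/negP => bn.
have : b * nsq (F i) < nsq (F i) * nsq (F i) by rewrite ltr_pM2r // (le_lt_trans b0 bn).
lra.
Qed.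

Lemma dual_partial_sums_nsq i : exists s0 : seq I, forall t, uniq t -> {subset s0 <= t} ->
  nsq (\sum_(j <- t) ip (Ft i) (F j) *: F j) <= 2 * b + 2.
Proof.
have [_ hsum] := dual i; have [s0 hs0] := hsum 1 ltr01.
exists s0 => t ut st; set g := \sum_(j <- t) _.
have near_Fi : nsq (g - F i) < 1 by have := hs0 t ut st; rewrite ipxx ltcR.
have := nsqD_le (F i) (g - F i); rewrite addrC subrK.
by have := frame_nsq_le i; lra.
Qed.

Lemma dual_nsq_le i : nsq (Ft i) <= (2 * b + 2) / a ^+ 2.
Proof.
apply: nsq_le_of_Re_ip => // r r_lt.
have [s0 hs0] := dual_partial_sums_nsq i; have [Ftspan _] := dual i.
have [|s [us rs]] := frame_lower Ftspan (c := r%:C).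
  by rewrite ipxx -rmorphM ltcR.
pose t := s ++ [seq j <- undup s0 | j \notin s].
have ut : uniq t.
  rewrite cat_uniq us filter_uniq ?undup_uniq // andbT.
  by apply/hasPn => j; rewrite mem_filter => /andP[].
have st : {subset s0 <= t}.
  by move=> j j0; rewrite mem_cat mem_filter mem_undup j0 andbT orbN.
exists (\sum_(j <- t) ip (Ft i) (F j) *: F j); first exact: hs0.
rewrite ip_expansion_self.
have : r%:C < \sum_(j <- t) `|ip (Ft i) (F j)| ^+ 2.
  apply: lt_le_trans rs _; rewrite big_cat /= lerDl.
  by apply: sumr_ge0 => j _; exact: exprn_ge0.
by rewrite ltcE => /andP[_].
Qed.

Lemma frame_diag_le i : `|Re (ip (F i) (Ft i))| <= (b + (2 * b + 2) / a ^+ 2) / 2.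
Proof.
have := norm_Re_ip_le (F i) (Ft i); have := frame_nsq_le i; have := dual_nsq_le i.
lra.
Qed.

End Frame.

Lemma frame_diag_bounded (I : choiceType) (F Ft : I -> H) :
  is_frame ip F -> is_canonical_dual ip F Ft ->
  exists C, forall i, `|Re (ip (F i) (Ft i))| <= C.
Proof.
move=> [A [B [A0 B0 hfr]]] dual.
have eA := RRe_real (gtr0_real A0); have eB := RRe_real (gtr0_real B0).
eexists => i; apply: (frame_diag_le (a := Re A) (b := Re B)) dual i.
- by rewrite -ltcR eA.
- by rewrite -lecR eB ltW.
- by move=> x xs s us; rewrite eB; exact: (hfr x xs).1.
- by move=> x xs c; rewrite eA; exact: (hfr x xs).2.
Qed.

End InnerProduct.

Lemma big_fsetDS (R : nmodType) (T : choiceType) (A B : {fset T}) (G : T -> R) :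
  (B `<=` A)%fset ->
  \sum_(i <- A) G i = \sum_(i <- B) G i + \sum_(i <- (A `\` B)%fset) G i.
Proof.
move=> BA; rewrite (big_fsetID _ (mem B)); congr (_ + _); apply: eq_fbigl => x; rewrite !inE.
  by apply/andP/idP => [[]|xB] //; rewrite xB (fsubsetP BA).
by rewrite andbC.
Qed.

Lemma norm_sum_le_size (R : numDomainType) (T : Type) (s : seq T) (G : T -> R) (C : R) :
  (forall i, `|G i| <= C) -> `|\sum_(i <- s) G i| <= C * (size s)%:R.
Proof.
move=> GC; apply: le_trans (ler_norm_sum _ _ _) _.
elim: s => [|j s IHs]; first by rewrite big_nil mulr0.
by rewrite big_cons /= -addn1 natrD mulrDr mulr1 addrC lerD.
Qed.

Lemma bframe_dominated (R : realType) (I : choiceType) (In : nat -> {fset I})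
    (hnest : forall n, (In n `<=` In n.+1)%fset)
    (H : lmodType R[i]) (ip : H -> H -> R[i]) (hip : is_inner_product ip)
    (F Ft : I -> H) :
  is_frame ip F -> is_canonical_dual ip F Ft -> bframe ip In F Ft \in dominated In.
Proof.
move=> frameF dualFt; have [C FC] := frame_diag_bounded hip frameF dualFt.
have FC1 i : `|complex.Re (ip (F i) (Ft i))| <= `|C| + 1.
  by apply: le_trans (FC i) _; apply: ler_wpDr => //; exact: ler_norm.
apply/dominatedP; exists (`|C| + 1); first by rewrite ltr_wpDl.
rewrite /bframe; split=> [|n]; first by rewrite raddf_sum; exact: norm_sum_le_size.
rewrite (big_fsetDS _ (hnest n)) raddfD /= addrC addKr raddf_sum.
exact: norm_sum_le_size.
Qed.

Theorem corollary6p18 (R : realType) (I : choiceType) (In : nat -> {fset I})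
    (hnest : forall n, (In n `<=` In n.+1)%fset)
    (hunion : forall i : I, exists n, i \in In n)
    (i0 : I)
    (H : lmodType R[i]) (ip : H -> H -> R[i]) (hH : is_separable_hilbert ip)
    (W : topologicalType) (hWc : compact [set: W]) (hWh : hausdorff_space W)
    (m : (nat -> R) -> W -> R)
    (hm : seq_measure_fun In m) (hmin : smf_minimal In m) :
  exists (phi : N0 R In -> W) (psi : W -> N0 R In),
    [/\ continuous phi, continuous psi, cancel phi psi, cancel psi phi &
        forall (q : N0 R In) (F Ft : I -> H),
          is_frame ip F -> is_canonical_dual ip F Ft ->
          frame_measure_fun ip In m F Ft (phi q) = mu0 (bframe ip In F Ft) q].
Proof.
have hpos := cardI_gt0_near R hnest (hunion i0).
have [hsep hred] := hmin; have [hip _ _] := hH.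
pose phi := N0_point hnest hpos hm hWc.
have psiP w : exists q, phi q = w := N0_point_surj hnest hpos hm hWc hsep hred w.
pose psi w := projT1 (cid (psiP w)).
have psiK : cancel psi phi by move=> w; rewrite /psi; case: cid.
have phiK : cancel phi psi by move=> q; exact: N0_point_inj (psiK (phi q)).
have phi_cont : continuous phi := N0_point_continuous hsep.
exists phi, psi; split=> //.
- by apply: (continuous_cancel_compact _ hWh phi_cont phiK psiK); exact: N0_compact.
- move=> q F Ft frameF dualFt; rewrite /frame_measure_fun N0_pointE //.
  exact: bframe_dominated.
Qed.
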